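(* Let $p$ be a prime and $\ell\ge1$. Let $\mathbb H\subseteq GL_n$ be a $\mathbb Q$-algebraic subgroup and let $\rho:\mathbb G\to\mathbb H$ be an isomorphism of $\mathbb Q$-algebraic groups. Let $\Gamma\le\mathbb G(\mathbb Q)$ be the image of $BS(1,p^\ell)$ under the standard embedding, i.e. $\Gamma=\left\{\begin{pmatrix}p^{\ell k}&r\\0&1\end{pmatrix}:k\in\mathbb Z,\ r\in\mathbb Z[1/p]\right\}$. Then $\rho(\Gamma)$ has the congruence subgroup property: every finite-index subgroup $K$ of $\rho(\Gamma)$ contains $\rho(\Gamma)(M)$ for some integer $M>1$ coprime to $p$.
   Context: $\mathbb G=\mathbb G_a\rtimes\mathbb G_m$ is the affine group, viewed as the $\mathbb Q$-algebraic subgroup of $GL_2$ consisting of matrices $\begin{pmatrix}x&y\\0&1\end{pmatrix}$ with $x$ invertible. For a subgroup $\Lambda\le GL_n(\mathbb Q)$ and an integer $M>0$ coprime to $p$, $\Lambda(M)$ denotes the set of $g\in\Lambda\cap GL_n(\mathbb Z[1/p])$ with $g\equiv\mathbf 1_n\pmod{M\mathbb Z[1/p]}$ entrywise, i.e. the intersection of $\Lambda$ with the kernel of reduction $GL_n(\mathbb Z[1/p])\to GL_n(\mathbb Z/M\mathbb Z)$. *)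

From mathcomp Require Import all_boot all_order all_algebra.
From mathcomp Require Import mpoly.
Set Implicit Arguments. Unset Strict Implicit. Unset Printing Implicit Defensive.
Import Order.TTheory GRing.Theory Num.Theory.
Local Open Scope ring_scope.

(* The affine group G = G_a x| G_m: its Q-points are the matrices          *)
(*   [[x, y], [0, 1]]  with x : rat, x != 0, encoded by the pair (x, y).   *)
(* The coordinate ring of G is Q[x, x^-1, y]; a regular function on G is   *)
(* an element of {mpoly rat[3]} evaluated at (x, x^-1, y).                 *)
Definition Gcoords (x y : rat) : 'I_3 -> rat := fun i => [:: x; x^-1; y]`_i.

(* Coordinate ring of GL_n: Q[a_ij, det^-1]; a regular function on GL_n is *)
(* an element of {mpoly rat[n*n+1]} evaluated at (entries of A, det A^-1).  *)
Definition GLcoords n (A : 'M[rat]_n) : 'I_(n * n + 1) -> rat :=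
  fun i => (row_mx (mxvec A) ((\det A)^-1)%:M) 0 i.

Definition rho_at n (P : 'M[{mpoly rat[3]}]_n) (x y : rat) : 'M[rat]_n :=
  map_mx (meval (Gcoords x y)) P.

(* P defines an isomorphism of Q-algebraic groups rho : G -> H, where       *)
(* H := rho(G) subset GL_n:                                                 *)
(*  - rho has a regular inverse H -> G, i.e. there are regular functions on *)
(*    GL_n whose restrictions to H recover the coordinates x, x^-1, y of    *)
(*    rho^-1 (so H is a closed subgroup and rho : G -> H is an isomorphism). *)
Definition alg_group_iso n (P : 'M[{mpoly rat[3]}]_n) : Prop :=
  [/\ forall x y : rat, x != 0 -> rho_at P x y \in unitmx,
      rho_at P 1 0 = 1%:M,
      forall x1 y1 x2 y2 : rat, x1 != 0 -> x2 != 0 ->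
        rho_at P (x1 * x2) (x1 * y2 + y1) = rho_at P x1 y1 *m rho_at P x2 y2 &
      exists fx fxi fy : {mpoly rat[n * n + 1]},
        forall x y : rat, x != 0 ->
          [/\ meval (GLcoords (rho_at P x y)) fx = x,
              meval (GLcoords (rho_at P x y)) fxi = x^-1 &
              meval (GLcoords (rho_at P x y)) fy = y]].

Definition inZp (p : nat) (r : rat) : Prop :=
  exists (a : int) (m : nat), r = a%:~R / (p%:R ^+ m).

Definition inGamma (p l : nat) (x y : rat) : Prop :=
  (exists k : int, x = (p%:R : rat) ^ (l%:Z * k)) /\ inZp p y.

Definition in_rhoGamma n (P : 'M[{mpoly rat[3]}]_n) (p l : nat) (g : 'M[rat]_n) : Prop :=
  exists x y : rat, inGamma p l x y /\ g = rho_at P x y.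

Definition finite_index_subgroup n (S K : 'M[rat]_n -> Prop) : Prop :=
  [/\ forall g, K g -> S g,
      K 1%:M,
      forall g h, K g -> K h -> K (g *m h),
      forall g, K g -> K (invmx g) &
      exists s : seq 'M[rat]_n,
        forall g, S g -> exists2 t, t \in s & exists2 k, K k & g = t *m k].

Definition cong_kernel n (p M : nat) (g : 'M[rat]_n) : Prop :=
  [/\ g \in unitmx,
      forall i j, inZp p (g i j),
      forall i j, inZp p (invmx g i j) &
      forall i j, exists2 r, inZp p r & g i j - (i == j)%:R = M%:R * r].

From Pilot Require Import Defs.
From mathcomp Require Import all_boot all_order all_algebra.
From mathcomp Require Import mpoly.
From mathcomp Require Import ring zify.
Set Implicit Arguments. Unset Strict Implicit. Unset Printing Implicit Defensive.
Import Order.TTheory GRing.Theory Num.Theory.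
Local Open Scope ring_scope.

(* Let K have finite index in rho(Gamma), say covered by the
   cosets t K, t in s.  By pigeonhole, every homomorphism h : Z -> rho(Gamma)
   maps D Z into K, where D = (size s)! does not depend on h.  Every element
   of rho(Gamma) factors as rho(1, y) rho(x, 0), a product of values of two
   such homomorphisms, z |-> rho(1, z w) and z |-> rho(p^(l z), 0).
   Since rho^-1 is given by regular functions on GL_n, whose denominators can
   be cleared by an integer N coprime to p, an element rho(x, y) in the
   congruence kernel of level N M satisfies x = 1 and y = 0 mod M Z[1/p].
   Taking M = (p^(2lD) - 1) * D_p' (D_p' the p'-part of D) forces y in D Z[1/p]
   and, as p has order exactly 2lD modulo p^(2lD) - 1, x = p^(l k) with D | k;
   both factors of rho(x, y) then lie in K. *)

(* Membership in Z[1/p], shadowing the residue map inZp of zmodp. *)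
Local Notation inZp := Defs.inZp.

Definition inMZp (p M : nat) (z : rat) : Prop :=
  exists2 r, inZp p r & z = M%:R * r.

Definition eqZp (p M : nat) (a b : rat) : Prop :=
  [/\ inZp p a, inZp p b & inMZp p M (a - b)].

Section IntegersAwayFromP.
Variable p : nat.
Hypothesis p_gt0 : (0 < p)%N.

Lemma natr_p_neq0 : (p%:R : rat) != 0.
Proof. by rewrite pnatr_eq0 -lt0n. Qed.

Lemma inZp_int (a : int) : inZp p a%:~R.
Proof. by exists a, 0%N; rewrite expr0 divr1. Qed.

Lemma inZp_nat (a : nat) : inZp p a%:R.
Proof. exact: inZp_int a. Qed.

Lemma inZpD a b : inZp p a -> inZp p b -> inZp p (a + b).
Proof.
move=> [x [m ->]] [y [k ->]].
exists (x * (p ^ k)%:Z + y * (p ^ m)%:Z), (m + k)%N.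
have := natr_p_neq0; rewrite exprD rmorphD /= !rmorphM /= -!natrX !pmulrn => ?.
by field; rewrite ?natrX ?mulf_neq0 ?expf_neq0.
Qed.

Lemma inZpN a : inZp p a -> inZp p (- a).
Proof. by move=> [x [m ->]]; exists (- x), m; rewrite rmorphN /= mulNr. Qed.

Lemma inZpM a b : inZp p a -> inZp p b -> inZp p (a * b).
Proof.
move=> [x [m ->]] [y [k ->]]; exists (x * y), (m + k)%N.
have := natr_p_neq0; rewrite exprD !rmorphM /= => ?.
by field; rewrite ?mulf_neq0 ?expf_neq0.
Qed.

Lemma inZp_pexpz (z : int) : inZp p (p%:R ^ z).
Proof.
case: z => m; first by rewrite -exprnP -natrX; apply: inZp_nat.
by rewrite NegzE -exprnN; exists 1, m.+1; rewrite mul1r.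
Qed.

Lemma inMZp0 M : inMZp p M 0.
Proof. by exists 0; [apply: inZp_nat 0%N | rewrite mulr0]. Qed.

Lemma inMZpD M a b : inMZp p M a -> inMZp p M b -> inMZp p M (a + b).
Proof. by move=> [r ? ->] [s ? ->]; exists (r + s); [apply: inZpD | rewrite mulrDr]. Qed.

Lemma inMZpMl M c a : inZp p c -> inMZp p M a -> inMZp p M (c * a).
Proof. by move=> ? [r ? ->]; exists (c * r); [apply: inZpM | rewrite mulrCA]. Qed.

Lemma inMZp_dvd d M a : (d %| M)%N -> inMZp p M a -> inMZp p d a.
Proof.
move=> /dvdnP [k ->] [r ? ->]; exists (k%:R * r); first by apply: inZpM => //; apply: inZp_nat.
by rewrite natrM mulrCA mulrA.
Qed.

(* M Z[1/p] = (M p^e) Z[1/p], since p is invertible in Z[1/p]. *)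
Lemma inMZp_pfactor M e a : inMZp p M a -> inMZp p (M * p ^ e) a.
Proof.
move=> [r ? ->]; exists (p%:R ^ (- e%:Z) * r); first by apply: inZpM => //; apply: inZp_pexpz.
have pe0 : (p%:R : rat) ^+ e != 0 by rewrite expf_neq0 // natr_p_neq0.
rewrite natrM natrX -exprnN; field; exact: pe0.
Qed.

Lemma inMZp_cancel c M a : (0 < c)%N -> inMZp p (c * M) (c%:R * a) -> inMZp p M a.
Proof.
move=> c_gt0 [r ? e]; exists r => //.
by apply: (mulfI (_ : c%:R != 0)); rewrite ?pnatr_eq0 -?lt0n // e natrM mulrA.
Qed.

Lemma inMZp_natr Q t : coprime Q p -> inMZp p Q t%:R -> (Q %| t)%N.
Proof.
move=> cQ [_ [a [m ->]] e].
have : (t * p ^ m)%N%:Z = Q%:Z * a.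
  apply: (@intr_inj rat); rewrite rmorphM /= -[LHS]/((t * p ^ m)%N%:R) natrM natrX e.
  by field; rewrite expf_neq0 // natr_p_neq0.
move=> /(congr1 absz); rewrite abszM /= => eQ.
by rewrite -(Gauss_dvdl _ (coprimeXr m cQ)) eQ dvdn_mulr.
Qed.

Lemma eqZp_refl M a : inZp p a -> eqZp p M a a.
Proof. by move=> ?; split; rewrite ?subrr; last apply: inMZp0. Qed.

Lemma eqZpD M a b c d : eqZp p M a b -> eqZp p M c d -> eqZp p M (a + c) (b + d).
Proof.
move=> [? ? ab] [? ? cd]; split; try exact: inZpD.
by rewrite opprD addrACA; apply: inMZpD.
Qed.

Lemma eqZpM M a b c d : eqZp p M a b -> eqZp p M c d -> eqZp p M (a * c) (b * d).
Proof.
move=> [? ? ab] [? ? cd]; split; try exact: inZpM.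
have -> : a * c - b * d = a * (c - d) + d * (a - b) by ring.
by apply: inMZpD; apply: inMZpMl.
Qed.

Lemma eqZpX M a b k : eqZp p M a b -> eqZp p M (a ^+ k) (b ^+ k).
Proof.
move=> ab; elim: k => [|k IH]; first by rewrite !expr0; apply: eqZp_refl; exact: (inZp_nat 1).
by rewrite !exprS; apply: eqZpM.
Qed.

Lemma eqZpV M a b : a != 0 -> b != 0 -> inZp p a^-1 -> inZp p b^-1 ->
  eqZp p M a b -> eqZp p M a^-1 b^-1.
Proof.
move=> a0 b0 ? ? [_ _ ab]; split => //.
have -> : a^-1 - b^-1 = - (a^-1 * b^-1) * (a - b) by field; apply/andP.
by apply: inMZpMl => //; apply: inZpN; apply: inZpM.
Qed.

Lemma eqZp_sum M (I : Type) (r : seq I) (P : pred I) (F G : I -> rat) :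
  (forall i, P i -> eqZp p M (F i) (G i)) ->
  eqZp p M (\sum_(i <- r | P i) F i) (\sum_(i <- r | P i) G i).
Proof.
move=> FG; apply: (big_ind2 (eqZp p M)) => //; last exact: eqZpD.
by apply: eqZp_refl; exact: (inZp_nat 0).
Qed.

Lemma eqZp_prod M (I : Type) (r : seq I) (P : pred I) (F G : I -> rat) :
  (forall i, P i -> eqZp p M (F i) (G i)) ->
  eqZp p M (\prod_(i <- r | P i) F i) (\prod_(i <- r | P i) G i).
Proof.
move=> FG; apply: (big_ind2 (eqZp p M)) => //; last exact: eqZpM.
by apply: eqZp_refl; exact: (inZp_nat 1).
Qed.

Lemma eqZp_unit_exprz M u (c : int) : u != 0 -> inZp p u^-1 ->
  eqZp p M u 1 -> eqZp p M (u ^ c) 1.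
Proof.
move=> u0 u_inv u_cong; case: c => m; first by rewrite -exprnP -(expr1n _ m); apply: eqZpX.
rewrite NegzE -exprnN -exprVn -(expr1n _ m.+1); apply: eqZpX.
by rewrite -invr1; apply: eqZpV; rewrite ?oner_neq0 ?invr1 //; exact: (inZp_nat 1).
Qed.

(* The determinant is a polynomial with integer coefficients in the entries. *)
Lemma eqZp_det M n (A B : 'M[rat]_n) :
  (forall i j, eqZp p M (A i j) (B i j)) -> eqZp p M (\det A) (\det B).
Proof.
move=> AB; apply: eqZp_sum => s _; apply: eqZpM; last exact: eqZp_prod.
apply: eqZp_refl; case: (perm.odd_perm s); last exact: (inZp_nat 1).
by apply: inZpN; exact: (inZp_nat 1).
Qed.

(* Clearing denominators: some positive integer multiple of a polynomial with
   rational coefficients respects congruences modulo every M Z[1/p]. *)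
Lemma meval_eqZp_den k (f : {mpoly rat[k]}) : exists2 N : nat, (0 < N)%N &
  forall M (c c0 : 'I_k -> rat), (forall i, eqZp p M (c i) (c0 i)) ->
    eqZp p M (N%:R * f.@[c]) (N%:R * f.@[c0]).
Proof.
elim/mpolyind: f => [|a m f _ _ [N N_gt0 IH]].
  exists 1%N => // M c c0 _; rewrite !meval0 mulr0; apply: eqZp_refl; exact: (inZp_nat 0).
exists (`|denq a| * N)%N => [|M c c0 cc0]; first by rewrite muln_gt0 N_gt0 absz_gt0 denq_neq0.
have den : (`|denq a|%:R : rat) = (denq a)%:~R.
  by rewrite -[_%:R]/((`|denq a|%:Z)%:~R) abszE gtr0_norm // denq_gt0.
have expand v : ((`|denq a| * N)%:R * (a *: 'X_[m] + f).@[v] : rat)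
   = (N%:R * (numq a)%:~R) * (\prod_i v i ^+ m i) + `|denq a|%:R * (N%:R * f.@[v]).
  by rewrite mevalD mevalZ mevalX natrM den numqE; ring.
rewrite !expand; apply: eqZpD; apply: eqZpM; last exact: IH.
- by apply: eqZp_refl; apply: inZpM; [apply: inZp_nat | apply: inZp_int].
- by apply: eqZp_prod => i _; apply: eqZpX.
- by apply: eqZp_refl; apply: inZp_nat.
Qed.

Lemma GLcoords_eqZp n M (g : 'M[rat]_n) : cong_kernel p M g ->
  forall i, eqZp p M (GLcoords g i) (GLcoords 1%:M i).
Proof.
move=> [g_unit g_Zp ginv_Zp g_cong].
have entries i j : eqZp p M (g i j) (1%:M i j).
  by split => //; rewrite mxE; [apply: inZp_nat | apply: g_cong].
have det_inv : eqZp p M (\det g)^-1 1.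
  have det_g0 : \det g != 0 by rewrite -unitfE -unitmxE.
  have [inv_det_Zp _ _] := eqZp_det (fun i j => eqZp_refl M (ginv_Zp i j) : eqZp p M _ _).
  have det_cong := eqZp_det entries; rewrite det1 in det_cong.
  rewrite det_inv in inv_det_Zp; rewrite -invr1.
  by apply: eqZpV => //; rewrite ?oner_neq0 ?invr1 //; exact: (inZp_nat 1).
move=> i; rewrite -(splitK i); case: (split i) => [j|j] /=; rewrite /GLcoords.
  by rewrite !row_mxEl; case: (mxvec_indexP j) => a b; rewrite !mxvecE.
by rewrite !row_mxEr ord1 !mxE det1 invr1 eqxx !mulr1n.
Qed.

End IntegersAwayFromP.

(* The integer N of meval_eqZp_den can be taken coprime to p, since powers of
   p are units of Z[1/p]. *)
Lemma meval_eqZp p k (f : {mpoly rat[k]}) : prime p ->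
  exists N : nat, [/\ (0 < N)%N, coprime N p &
    forall M (c c0 : 'I_k -> rat), (forall i, eqZp p M (c i) (c0 i)) ->
      eqZp p M (N%:R * f.@[c]) (N%:R * f.@[c0])].
Proof.
move=> p_pr; have p_gt0 := prime_gt0 p_pr.
have [N N_gt0 fN] := meval_eqZp_den p_gt0 f.
have [Np p_Np eN] := pfactor_coprime p_pr N_gt0.
exists Np; split; last move=> M c c0 cc0.
- by move: N_gt0; rewrite eN muln_gt0 => /andP [].
- by rewrite coprime_sym.
have eNp : (Np%:R : rat) = p%:R ^ (- (logn p N)%:Z) * N%:R.
  move: (logn p N) eN => a ->; rewrite natrM natrX -exprnN; field.
  by rewrite expf_neq0 // natr_p_neq0.
rewrite eNp -!mulrA; apply: (eqZpM p_gt0); last exact: fN.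
by apply: eqZp_refl; apply: inZp_pexpz.
Qed.

Lemma regular_fun_eqZp p n (f : {mpoly rat[n * n + 1]}) : prime p ->
  exists N : nat, [/\ (0 < N)%N, coprime N p &
    forall M (g : 'M[rat]_n), cong_kernel p (N * M) g ->
      inMZp p M (f.@[GLcoords g] - f.@[GLcoords 1%:M])].
Proof.
move=> p_pr; have p_gt0 := prime_gt0 p_pr.
have [N [N_gt0 N_p fN]] := meval_eqZp f p_pr.
exists N; split => // M g /(GLcoords_eqZp p_gt0) /fN [_ _].
by rewrite -mulrBr; apply: inMZp_cancel.
Qed.

Lemma coprime_pexp_pred p e : (0 < p)%N -> (0 < e)%N -> coprime (p ^ e).-1 p.
Proof.
move=> p_gt0 e_gt0; rewrite -(coprime_pexpr _ _ e_gt0).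
by rewrite -[X in coprime _ X]prednK ?expn_gt0 ?p_gt0 // coprimenS.
Qed.

Lemma pexp_pred_gt1 p e : (1 < p)%N -> (1 < e)%N -> (1 < (p ^ e).-1)%N.
Proof.
move=> p_gt1 e_gt1; have : (p ^ 2 <= p ^ e)%N by rewrite leq_pexp2l // ltnW.
by rewrite expnS expn1; nia.
Qed.

Lemma pexp_eqZp1 p e r : (1 < p)%N -> (r < e)%N ->
  eqZp p (p ^ e).-1 (p ^ r)%N%:R 1 -> r = 0%N.
Proof.
move=> p_gt1 r_lt [_ _ pr_cong]; have p_gt0 := ltnW p_gt1.
have pr_gt0 : (0 < p ^ r)%N by rewrite expn_gt0 p_gt0.
have Q_dvd : ((p ^ e).-1 %| (p ^ r).-1)%N.
  move: pr_cong; rewrite -{1}[(p ^ r)%N]prednK // -natr1 addrK.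
  exact/inMZp_natr/coprime_pexp_pred/(leq_ltn_trans (leq0n r) r_lt).
have /eqP pr1 : (p ^ r).-1 == 0%N.
  rewrite -leqn0 leqNgt; apply/negP => /dvdn_leq /(_ Q_dvd).
  by have := ltn_exp2l r e p_gt1; rewrite r_lt; lia.
by apply/eqP; rewrite -leqn0 leqNgt -(ltn_exp2l 0 _ p_gt1) expn0 -(prednK pr_gt0) pr1.
Qed.

Lemma pexpz_eqZp_dvd p e (j : int) : (1 < p)%N -> (0 < e)%N ->
  inMZp p (p ^ e).-1 (p%:R ^ j - 1) -> (e%:Z %| j)%Z.
Proof.
move=> p_gt1 e_gt0 pj1; have p_gt0 := ltnW p_gt1; have p0 := natr_p_neq0 p_gt0.
set Q := (p ^ e).-1; set u : rat := p%:R ^+ e.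
have u_cong : eqZp p Q u 1.
  split; [by rewrite /u -natrX; apply: inZp_nat | exact: (inZp_nat p 1) |].
  exists 1; first exact: (inZp_nat p 1).
  by rewrite mulr1 /u -natrX /Q -{1}[(p ^ e)%N]prednK ?expn_gt0 ?p_gt0 // -natr1 addrK.
have u_inv : inZp p u^-1 by rewrite /u exprnN; apply: inZp_pexpz.
have e_pos : (0 < e%:Z) by rewrite ltz_nat.
have [r_ge0 r_lt] := (modz_ge0 j (lt0r_neq0 e_pos), ltz_pmod j e_pos).
set q := (j %/ e)%Z; set r := (j %% e)%Z.
have [r' er] : exists r' : nat, r = r' by exists `|r|%N; rewrite gez0_abs.
have ej : j = q * e%:Z + r'%:Z by rewrite -er [LHS](divz_eq j e).
have pr_cong : eqZp p Q (p ^ r')%N%:R 1.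
  have -> : ((p ^ r')%N%:R : rat) = u ^ (- q) * p%:R ^ j.
    rewrite ej expfzDr // /u exprnP exprz_exp mulrA -expfzDr //.
    by rewrite mulrN [_ * q]mulrC addNr expr0z mul1r -exprnP natrX.
  rewrite -(mulr1 1); apply: eqZpM => //.
    by apply: eqZp_unit_exprz => //; rewrite expf_neq0.
  by split => //; [exact: inZp_pexpz | exact: (inZp_nat p 1)].
have r'0 := pexp_eqZp1 p_gt1 (_ : r' < e)%N pr_cong.
by rewrite ej r'0 ?addr0 ?dvdz_mull // -ltz_nat -er.
Qed.

(* Since rho^-1 is given by regular functions on GL_n, an element rho(x, y)
   of a deep enough congruence kernel has x = 1 and y = 0 modulo M Z[1/p]. *)
Lemma rho_coords_cong p n (P : 'M[{mpoly rat[3]}]_n) : prime p -> alg_group_iso P ->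
  exists N : nat, [/\ (0 < N)%N, coprime N p &
    forall M x y, x != 0 -> cong_kernel p (N * M) (rho_at P x y) ->
      inMZp p M (x - 1) /\ inMZp p M y].
Proof.
move=> p_pr [_ rho1 _ [fx [fxi [fy f_inv]]]]; have p_gt0 := prime_gt0 p_pr.
have [Nx [Nx_gt0 Nx_p fx_cong]] := regular_fun_eqZp fx p_pr.
have [Ny [Ny_gt0 Ny_p fy_cong]] := regular_fun_eqZp fy p_pr.
have [fx1 _ fy1] := f_inv 1 0 (oner_neq0 _); rewrite rho1 in fx1 fy1.
exists (Nx * Ny)%N; split; [by rewrite muln_gt0 Nx_gt0 | by rewrite coprimeMl Nx_p |].
move=> M x y x0 ker; have [fxg _ fyg] := f_inv x y x0.
have M_dvd d : (M %| d * M)%N := dvdn_mull d (dvdnn M).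
split; [apply: (inMZp_dvd p_gt0 (M_dvd Ny)) | apply: (inMZp_dvd p_gt0 (M_dvd Nx))].
- by rewrite -fxg -fx1; apply: fx_cong; rewrite mulnA.
- by rewrite -(subr0 y) -fyg -fy1; apply: fy_cong; rewrite mulnCA mulnA.
Qed.

Lemma pigeonhole_seq (T : eqType) (s : seq T) (R : nat -> T -> Prop) :
  (forall i, (i <= size s)%N -> exists2 t, t \in s & R i t) ->
  exists i j t, [/\ (i < j <= size s)%N, R i t & R j t].
Proof.
move=> cover; have [x0 _ _] := cover 0%N (leq0n _).
have pick (i : 'I_(size s).+1) : exists k : 'I_(size s), R i (nth x0 s k).
  have [t ts Rt] := cover i (ltn_ord i).
  by exists (Ordinal (etrans (index_mem t s) ts)); rewrite /= nth_index.
have [f Rf] := fin_all_exists pick.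
have /injectivePn [i [j neq_ij fij]] : ~~ injectiveb f.
  by apply/injectiveP => /leq_card; rewrite !card_ord ltnn.
wlog lt_ij : i j neq_ij fij / (i < j)%N.
  move=> wlog_ij; case: (ltngtP i j) => [lt|lt|/val_inj eq]; first exact: (wlog_ij i j).
    by apply: (wlog_ij j i) => //; rewrite eq_sym.
  by rewrite eq eqxx in neq_ij.
exists i, j, (nth x0 s (f i)); split => //; last by rewrite fij.
by rewrite lt_ij -ltnS ltn_ord.
Qed.

Section FiniteIndexPowers.
Variables (n : nat) (S K : 'M[rat]_n -> Prop) (s : seq 'M[rat]_n).
Hypothesis K_1 : K 1%:M.
Hypothesis K_mul : forall g g', K g -> K g' -> K (g *m g').
Hypothesis K_inv : forall g, K g -> K (invmx g).
Hypothesis S_cover : forall g, S g -> exists2 t, t \in s & exists2 k, K k & g = t *m k.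
Hypothesis S_unit : forall g, S g -> g \in unitmx.
Variable h : int -> 'M[rat]_n.
Hypothesis hD : forall i j, h (i + j) = h i *m h j.
Hypothesis h_S : forall i, S (h i).

Lemma hom0 : h 0 = 1%:M.
Proof.
have h0_unit := S_unit (h_S 0).
apply: (can_inj (mulKmx h0_unit)); by rewrite -hD addr0 mulmx1.
Qed.

Lemma homN i : h (- i) = invmx (h i).
Proof.
by rewrite -[LHS](mulKmx (S_unit (h_S i))) -hD addrN hom0 mulmx1.
Qed.

Lemma hom_multiple d : K (h d) -> forall c : int, K (h (c * d)).
Proof.
move=> Kd; have K_nat m : K (h (m%:Z * d)).
  elim: m => [|m IH]; first by rewrite mul0r hom0.
  by rewrite -addn1 PoszD mulrDl mul1r hD; apply: K_mul.
by case=> m; [exact: K_nat | rewrite NegzE mulNr homN; apply/K_inv/K_nat].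
Qed.

(* Two of h 0, ..., h (size s) lie in the same coset t K. *)
Lemma hom_return : exists2 d : nat, (0 < d <= size s)%N & K (h d).
Proof.
have [i [j [t [/andP [lt_ij le_js] [k Kk hi] [k' Kk' hj]]]]] :=
  pigeonhole_seq (R := fun i t => exists2 k, K k & h i = t *m k) (fun i _ => S_cover (h_S i)).
exists (j - i)%N; first by rewrite subn_gt0 lt_ij (leq_trans (leq_subr _ _)).
have /andP [t_unit k_unit] : (t \in unitmx) && (k \in unitmx).
  by rewrite -unitmx_mul -hi S_unit.
have -> : h (j - i)%N = invmx k *m k'.
  apply: (can_inj (mulKmx (S_unit (h_S i)))).
  by rewrite -hD -PoszD subnKC ?(ltnW lt_ij) // hj hi -mulmxA mulKVmx.
by apply: K_mul => //; apply: K_inv.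
Qed.

Lemma hom_factorial (c : int) : K (h (c * (size s)`!)).
Proof.
have [d d_range Kd] := hom_return.
have /dvdnP [q ->] := dvdn_fact d_range.
by rewrite PoszM mulrA; apply: hom_multiple.
Qed.

End FiniteIndexPowers.

Lemma finite_index_uniform_power n (S K : 'M[rat]_n -> Prop) :
  finite_index_subgroup S K -> (forall g, S g -> g \in unitmx) ->
  exists2 D : nat, (0 < D)%N & forall h : int -> 'M[rat]_n,
    (forall i j, h (i + j) = h i *m h j) -> (forall i, S (h i)) ->
    forall c : int, K (h (c * D%:Z)).
Proof.
move=> [_ K_1 K_mul K_inv [s S_cover]] S_unit.
exists (size s)`! => [|h hD h_S c]; first exact: fact_gt0.
exact: (hom_factorial K_1 K_mul K_inv S_cover S_unit hD h_S).
Qed.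

Definition rho_torus n (P : 'M[{mpoly rat[3]}]_n) (p l : nat) (z : int) : 'M[rat]_n :=
  rho_at P (p%:R ^ (l%:Z * z)) 0.

Definition rho_unip n (P : 'M[{mpoly rat[3]}]_n) (w : rat) (z : int) : 'M[rat]_n :=
  rho_at P 1 (z%:~R * w).

Section RhoGamma.
Variables (p l n : nat) (P : 'M[{mpoly rat[3]}]_n).
Hypothesis p_gt0 : (0 < p)%N.
Hypothesis P_iso : alg_group_iso P.

Lemma rhoGamma_unit g : in_rhoGamma P p l g -> g \in unitmx.
Proof.
case: P_iso => P_unit _ _ _ [x [y [[[k ->] _] ->]]].
by apply: P_unit; rewrite expfz_neq0 // natr_p_neq0.
Qed.

Lemma rho_torusD i j : rho_torus P p l (i + j) = rho_torus P p l i *m rho_torus P p l j.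
Proof.
case: P_iso => _ _ P_mul _; have p0 := natr_p_neq0 p_gt0.
by rewrite /rho_torus -P_mul ?expfz_neq0 // mulr0 addr0 mulrDr expfzDr.
Qed.

Lemma rho_torus_Gamma i : in_rhoGamma P p l (rho_torus P p l i).
Proof. by exists (p%:R ^ (l%:Z * i)), 0; do !split; [exists i | exact: inZp_nat 0%N]. Qed.

Lemma rho_unipD w i j : rho_unip P w (i + j) = rho_unip P w i *m rho_unip P w j.
Proof.
case: P_iso => _ _ P_mul _.
by rewrite /rho_unip -P_mul ?oner_neq0 // mulr1 mul1r rmorphD mulrDl addrC.
Qed.

Lemma rho_unip_Gamma w i : inZp p w -> in_rhoGamma P p l (rho_unip P w i).
Proof.
move=> w_Zp; exists 1, (i%:~R * w); do !split.
  by exists 0; rewrite mulr0 expr0z.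
by apply: (inZpM p_gt0) => //; apply: inZp_int.
Qed.

Lemma rho_decomposition k w (z : int) :
  rho_at P (p%:R ^ (l%:Z * k)) (z%:~R * w) = rho_unip P w z *m rho_torus P p l k.
Proof.
case: P_iso => _ _ P_mul _.
rewrite /rho_unip /rho_torus -P_mul ?oner_neq0 ?expfz_neq0 ?natr_p_neq0 //.
by rewrite mulr0 add0r !mul1r.
Qed.

End RhoGamma.

Theorem proposition1p6 (p l n : nat) (P : 'M[{mpoly rat[3]}]_n) :
  prime p -> (1 <= l)%N -> alg_group_iso P ->
  forall K : 'M[rat]_n -> Prop,
    finite_index_subgroup (in_rhoGamma P p l) K ->
    exists M : nat, [/\ (1 < M)%N, coprime M p &
      forall g, in_rhoGamma P p l g -> cong_kernel p M g -> K g].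
Proof.
move=> p_pr l_gt0 P_iso K K_fi; have p_gt0 := prime_gt0 p_pr.
have [_ _ K_mul _ _] := K_fi.
have [D D_gt0 K_hom] := finite_index_uniform_power K_fi (rhoGamma_unit p_gt0 P_iso).
have [N [N_gt0 N_p N_cong]] := rho_coords_cong p_pr P_iso.
have [Dp p_Dp eD] := pfactor_coprime p_pr D_gt0.
pose e := (l * D.*2)%N; pose Q := (p ^ e).-1.
have e_gt0 : (0 < e)%N by rewrite muln_gt0 l_gt0 double_gt0.
exists (N * (Q * Dp))%N; split.
- have Dp_gt0 : (0 < Dp)%N by move: D_gt0; rewrite eD muln_gt0 => /andP [].
  have e_gt1 : (1 < e)%N by rewrite /e -muln2 mulnA leq_pmull // muln_gt0 l_gt0.
  rewrite mulnCA (leq_trans (pexp_pred_gt1 (prime_gt1 p_pr) e_gt1)) //.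
  by rewrite leq_pmulr // muln_gt0 N_gt0.
- by rewrite !coprimeMl N_p coprime_pexp_pred // coprime_sym p_Dp.
move=> _ [x [y [[[k ->] y_Zp] ->]]] /N_cong [|x_cong y_cong].
  by rewrite expfz_neq0 // natr_p_neq0.
have /dvdzP [c ->] : (D%:Z %| k)%Z.
  have /(pexpz_eqZp_dvd (prime_gt1 p_pr) e_gt0) : inMZp p Q (p%:R ^ (l%:Z * k) - 1).
    by apply: (inMZp_dvd p_gt0 _ x_cong); apply: dvdn_mulr.
  rewrite /e PoszM dvdz_mul2l ?lt0r_neq0 ?ltz_nat //; apply: dvdz_trans.
  by rewrite -muln2 PoszM dvdz_mulr.
have [w w_Zp ->] : inMZp p D y.
  rewrite eD; apply: (inMZp_pfactor p_gt0).
  by apply: (inMZp_dvd p_gt0 _ y_cong); apply: dvdn_mull.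
rewrite -[D%:R]/(D%:Z%:~R) rho_decomposition //; apply: K_mul.
- rewrite -[D%:Z]mul1r; apply: (K_hom (rho_unip P w)) => [i j|i]; first exact: rho_unipD.
  exact: rho_unip_Gamma.
- apply: (K_hom (rho_torus P p l)) => [i j|i]; first exact: rho_torusD.
  exact: rho_torus_Gamma.
Qed.
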